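(* Fix $\varepsilon\in\{1,-1\}$, $m\in\{1,2,5,7,8,10,11,13,14,16,17,19,22,23\}$, and a nonnegative integer $n$ such that $\delta_m(n)$ is squarefree. With $A=18(m+24n)-\varepsilon$, $B=4\varepsilon/9$, $D=-3$, $r=1/3+A^2$, the number $J(m,n)=\frac{1}{64}(B^2D+2ABDr+A^2Dr^2+r^3)$ is an integer.
   Context: Let $f_m(n)=62208n^2+(5184m-432\varepsilon)n+(108m^2-18\varepsilon m+1)$, let $i=1$ if $m$ is odd, $i=2$ if $m$ is even and $m\ne8,16$, and $i=4$ if $m\in\{8,16\}$, and let $\delta_m(n)=2^{1-i}(m+24n)f_m(n)$. *)

From mathcomp Require Import all_boot all_order all_algebra.
Set Implicit Arguments. Unset Strict Implicit. Unset Printing Implicit Defensive.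
Import Order.TTheory GRing.Theory Num.Theory.
Local Open Scope ring_scope.

Definition f_m (eps : int) (m n : nat) : rat :=
  (256 * 243) * (n%:R) ^+ 2 + (5184 * m%:R - 432 * eps%:~R) * n%:R
  + (108 * (m%:R) ^+ 2 - 18 * eps%:~R * m%:R + 1).

Definition i_m (m : nat) : nat :=
  if odd m then 1%N else if (m == 8%N) || (m == 16%N) then 4%N else 2%N.

Definition delta_m (eps : int) (m n : nat) : rat :=
  (2%:R ^ (1 - (i_m m)%:Z)) * (m%:R + 24 * n%:R) * f_m eps m n.

(* A rational number is squarefree: it is an integer d not divisible by k^2
   for any integer k with |k| <> 1 (in particular d <> 0). *)
Definition squarefree_rat (x : rat) : Prop :=
  exists d : int, x = d%:~R /\ forall k : int, (k * k %| d)%Z -> `|k| = 1.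

Definition A_mn (eps : int) (m n : nat) : rat :=
  18 * (m%:R + 24 * n%:R) - eps%:~R.
Definition B_eps (eps : int) : rat := 4 * eps%:~R / 9.
Definition D_c : rat := -3.
Definition r_mn (eps : int) (m n : nat) : rat := 1 / 3 + (A_mn eps m n) ^+ 2.

Definition J_mn (eps : int) (m n : nat) : rat :=
  let A := A_mn eps m n in let B := B_eps eps in let D := D_c in
  let r := r_mn eps m n in
  (B ^+ 2 * D + 2 * A * B * D * r + A ^+ 2 * D * r ^+ 2 + r ^+ 3) / 64.

(* With r = A^2 + 1/3 and D = -3 the defining expression of J collapses to
   -(2 A^6 + A^4 + (8/3) eps A^3 + (8/9) eps A + 5/9) / 64, which, as
   eps^2 = 1, depends only on y = eps A = 18 t - 1 with t = eps (m + 24 n).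
   As a polynomial in t it equals (t (t + 1) / 2)^2 plus a polynomial with
   integer coefficients. *)
From mathcomp Require Import all_boot all_order all_algebra.
From mathcomp Require Import ring.
Import Order.TTheory GRing.Theory Num.Theory.
Local Open Scope ring_scope.

Lemma dvdn2_mul_succ (k : nat) : (2 %| k * k.+1)%N.
Proof. by rewrite dvdn2 oddM oddS; case: (odd k). Qed.

Lemma dvdz2_mul_succ (t : int) : (2 %| t * (t + 1))%Z.
Proof.
rewrite dvdzE abszM; case: t => k.
- by rewrite -PoszD addn1 !absz_nat dvdn2_mul_succ.
- have -> : Negz k + 1 = - k%:Z by rewrite NegzE -addn1 PoszD opprD addrK.
  by rewrite NegzE !abszN !absz_nat mulnC dvdn2_mul_succ.
Qed.

Definition J_red (y : rat) : rat :=
  - (18 * y ^+ 6 + 9 * y ^+ 4 + 24 * y ^+ 3 + 8 * y + 5) / 576.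

Lemma J_mnE (eps : int) (m n : nat) : (eps = 1 \/ eps = -1) ->
  J_mn eps m n = J_red (18 * (eps * (m + 24 * n)%N)%:~R - 1).
Proof.
rewrite /J_mn /r_mn /A_mn /B_eps /D_c /J_red intrM -pmulrn natrD natrM.
by case=> ->; field.
Qed.

(* Numerals in ring_scope are unary naturals, hence the factored coefficients. *)
Lemma J_red_18_sub1 (t u : int) : t * (t + 1) = u * 2 ->
  J_red (18 * t%:~R - 1) =
  (u ^+ 2 + 2 * t - 2 * t ^+ 2 * (71 - 1883 * t + 16 * 1589 * t ^+ 2
   - 3 ^+ 11 * t ^+ 3 + 3 ^+ 12 * t ^+ 4))%:~R.
Proof.
move=> /(congr1 (intr : int -> rat)); rewrite !rmorphM rmorphD /= => tu.
have uE : (u%:~R : rat) = t%:~R * (t%:~R + 1) / 2 by rewrite tu mulfK.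
rewrite !(rmorphD, rmorphB, rmorphM, rmorphXn) /= uE /J_red.
by field.
Qed.

Lemma J_red_18_sub1_int (t : int) :
  exists z : int, J_red (18 * t%:~R - 1) = z%:~R.
Proof.
have /dvdzP [u tu] := dvdz2_mul_succ t.
by eexists; exact: J_red_18_sub1 tu.
Qed.

Theorem lemma3p2 (eps : int) (m n : nat) :
  (eps = 1 \/ eps = -1) ->
  m \in [:: 1; 2; 5; 7; 8; 10; 11; 13; 14; 16; 17; 19; 22; 23]%N ->
  squarefree_rat (delta_m eps m n) ->
  exists z : int, J_mn eps m n = z%:~R.
Proof.
move=> eps_pm1 _ _; rewrite J_mnE //.
exact: J_red_18_sub1_int.
Qed.
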